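(* For any variety $\mathcal{V}$ of $\Omega$-algebras, $\mathcal{V}\circ\mathcal{S}\subseteq\mathcal{V}^p$.
   Context: Standing conventions: $\Omega$-algebras are of a plural similarity type (no nullary operation symbols, at least one operation symbol of arity $\ge2$). $T_n$ is the set of $\Omega$-terms in $x_1,\dots,x_n$ in which all $n$ variables occur. An identity is regular if the same variables occur on both sides. $\mathcal{S}$ is the variety of $\Omega$-algebras satisfying all regular identities. $\mathcal{V}\circ\mathcal{S}$ is the class of $\Omega$-algebras $A$ having a congruence $\theta$ with $A/\theta\in\mathcal{S}$ and every $\theta$-class (a subalgebra) in $\mathcal{V}$. Prolongation: for an identity $\sigma$ of the form $u(y_1,\dots,y_n)=v(y_1,\dots,y_n)$ and $m\ge1$, $\sigma^p_m$ is the set of identities $u(r_1,\dots,r_n)=v(r_1,\dots,r_n)$ obtained by substituting $r_i(x_1,\dots,x_m)$ for $y_i$, with $r_i$ ranging over $T_m$; $\sigma^p=\bigcup_m\sigma^p_m$; $\Sigma^p=\bigcup_{\sigma\in\Sigma}\sigma^p$. $\mathcal{V}^p$ is the variety defined by $\mathrm{Id}(\mathcal{V})^p$, where $\mathrm{Id}(\mathcal{V})$ is the set of all identities holding in $\mathcal{V}$. *)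

From mathcomp Require Import ssreflect ssrfun ssrbool eqtype ssrnat fintype.
From Stdlib Require Import ClassicalEpsilon.

Set Implicit Arguments.
Unset Strict Implicit.
Unset Printing Implicit Defensive.

Record signature := Signature { Op : Type; arity : Op -> nat }.

Definition plural (Sg : signature) : Prop :=
  (forall o : Op Sg, 0 < arity o) /\ (exists o : Op Sg, 1 < arity o).

Record algebra (Sg : signature) := Algebra {
  carrier :> Type;
  op : forall o : Op Sg, ('I_(arity o) -> carrier) -> carrier }.

(* Terms in the variables x_0, x_1, ... (indexed by nat; x_{i} here is x_{i+1} of the paper). *)
Inductive term (Sg : signature) : Type :=
| Var : nat -> term Sg
| App : forall o : Op Sg, ('I_(arity o) -> term Sg) -> term Sg.

Arguments Var {Sg} _.

Fixpoint eval (Sg : signature) (A : algebra Sg) (v : nat -> A) (t : term Sg) : A :=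
  match t with
  | Var i => v i
  | @App _ o f => @op _ A o (fun k => eval v (f k))
  end.

Fixpoint subst (Sg : signature) (s : nat -> term Sg) (t : term Sg) : term Sg :=
  match t with
  | Var i => s i
  | @App _ o f => @App _ o (fun k => subst s (f k))
  end.

Fixpoint occurs (Sg : signature) (i : nat) (t : term Sg) : Prop :=
  match t with
  | Var j => i = j
  | @App _ o f => exists k, occurs i (f k)
  end.

Definition in_T (Sg : signature) (m : nat) (t : term Sg) : Prop :=
  (forall i, occurs i t -> i < m) /\ (forall i, i < m -> occurs i t).

Definition identity (Sg : signature) : Type := (term Sg * term Sg)%type.

Definition satisfies (Sg : signature) (A : algebra Sg) (e : identity Sg) : Prop :=
  forall v : nat -> A, eval v e.1 = eval v e.2.

Definition Mod (Sg : signature) (Sigma : identity Sg -> Prop) (A : algebra Sg) : Prop :=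
  forall e, Sigma e -> satisfies A e.

Definition is_variety (Sg : signature) (V : algebra Sg -> Prop) : Prop :=
  exists Sigma : identity Sg -> Prop, forall A, V A <-> Mod Sigma A.

Definition Id (Sg : signature) (V : algebra Sg -> Prop) (e : identity Sg) : Prop :=
  forall A, V A -> satisfies A e.

Definition regular (Sg : signature) (e : identity Sg) : Prop :=
  forall i, occurs i e.1 <-> occurs i e.2.

Definition S_var (Sg : signature) : algebra Sg -> Prop := Mod (@regular Sg).

Definition prolong_m (Sg : signature) (m : nat) (sigma : identity Sg) (e : identity Sg) : Prop :=
  exists s : nat -> term Sg,
    (forall i, (occurs i sigma.1 \/ occurs i sigma.2) -> in_T m (s i)) /\
    e = (subst s sigma.1, subst s sigma.2).

Definition prolong (Sg : signature) (Sigma : identity Sg -> Prop) (e : identity Sg) : Prop :=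
  exists sigma, Sigma sigma /\ exists m, 1 <= m /\ prolong_m m sigma e.

Definition Vp (Sg : signature) (V : algebra Sg -> Prop) : algebra Sg -> Prop :=
  Mod (prolong (Id V)).

Definition congruence (Sg : signature) (A : algebra Sg) (th : A -> A -> Prop) : Prop :=
  (forall a, th a a) /\ (forall a b, th a b -> th b a) /\
  (forall a b c, th a b -> th b c -> th a c) /\
  (forall o (f g : 'I_(arity o) -> A), (forall k, th (f k) (g k)) -> th (@op _ A o f) (@op _ A o g)).

(* Quotient algebra A/th: carrier = the set of th-classes; operations act on
   (arbitrarily chosen) representatives. *)
Definition qcarrier (Sg : signature) (A : algebra Sg) (th : A -> A -> Prop) : Type :=
  {P : A -> Prop | exists a, P = th a}.

Definition qclass (Sg : signature) (A : algebra Sg) (th : A -> A -> Prop) (a : A)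
  : qcarrier th := exist _ (th a) (ex_intro _ a erefl).

Definition qrep (Sg : signature) (A : algebra Sg) (th : A -> A -> Prop)
  (c : qcarrier th) : A :=
  proj1_sig (constructive_indefinite_description _ (proj2_sig c)).

Definition quotient (Sg : signature) (A : algebra Sg) (th : A -> A -> Prop) : algebra Sg :=
  @Algebra Sg (qcarrier th)
    (fun o F => qclass th (@op _ A o (fun k => qrep (F k)))).

Definition closed (Sg : signature) (A : algebra Sg) (P : A -> Prop) : Prop :=
  forall o (f : 'I_(arity o) -> A), (forall k, P (f k)) -> P (@op _ A o f).

Definition subalgebra (Sg : signature) (A : algebra Sg) (P : A -> Prop)
  (H : closed P) : algebra Sg :=
  @Algebra Sg {a : A | P a}
    (fun o f => exist _ (@op _ A o (fun k => proj1_sig (f k)))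
                        (H o _ (fun k => proj2_sig (f k)))).

Definition VoS (Sg : signature) (V : algebra Sg -> Prop) (A : algebra Sg) : Prop :=
  exists th : A -> A -> Prop,
    congruence th /\ S_var (quotient th) /\
    forall a : A, exists H : closed (th a), V (subalgebra H).

From mathcomp Require Import ssreflect ssrfun ssrbool eqtype ssrnat fintype.
From Stdlib Require Import ClassicalEpsilon FunctionalExtensionality.
From Stdlib Require Import PropExtensionality ProofIrrelevance.

(** Idea: if every variable of an identity [u = v] of [V] is replaced by a term
    of [T_m], any two of the substituted terms have the same variables, so they
    form a regular identity; this holds in [A/th], hence under any valuation
    all substituted terms take values in a single [th]-class.  That class is a
    subalgebra lying in [V], where [u = v] holds. *)

Section Evaluation.

Variables (Sg : signature) (A : algebra Sg).

Lemma eq_eval (v1 v2 : nat -> A) (t : term Sg) :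
  (forall i, occurs i t -> v1 i = v2 i) -> eval v1 t = eval v2 t.
Proof.
elim: t => [i|o f IH] /= Hv; first exact: Hv.
f_equal; apply: functional_extensionality => k.
by apply: IH => i Hi; apply: Hv; exists k.
Qed.

Lemma eval_subst (v : nat -> A) (s : nat -> term Sg) (t : term Sg) :
  eval v (subst s t) = eval (fun i => eval v (s i)) t.
Proof.
elim: t => [i|o f IH] //=.
by f_equal; apply: functional_extensionality => k.
Qed.

Lemma val_eval_subalgebra (P : A -> Prop) (H : closed P)
    (w : nat -> subalgebra H) (t : term Sg) :
  proj1_sig (eval w t) = eval (fun i => proj1_sig (w i)) t.
Proof.
elim: t => [i|o f IH] //=.
by f_equal; apply: functional_extensionality => k.
Qed.

(* [a0] supplies the values of the variables that do not occur in [e]. *)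
Lemma satisfies_subalgebra (P : A -> Prop) (H : closed P) (e : identity Sg)
    (a0 : A) (u : nat -> A) :
  satisfies (subalgebra H) e -> P a0 ->
  (forall i, occurs i e.1 \/ occurs i e.2 -> P (u i)) ->
  eval u e.1 = eval u e.2.
Proof.
move=> He Pa0 Pu.
pose w i : subalgebra H :=
  match excluded_middle_informative (P (u i)) with
  | left Pui => exist _ (u i) Pui
  | right _ => exist _ a0 Pa0
  end.
have w_u i : P (u i) -> proj1_sig (w i) = u i.
  by rewrite /w; case: excluded_middle_informative.
have := f_equal (@proj1_sig _ _) (He w).
rewrite !val_eval_subalgebra.
rewrite (@eq_eval _ u e.1); last by move=> i Hi; apply/w_u/Pu; left.
by rewrite (@eq_eval _ u e.2) //; move=> i Hi; apply/w_u/Pu; right.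
Qed.

End Evaluation.

Section Quotient.

Variables (Sg : signature) (A : algebra Sg) (th : A -> A -> Prop).
Hypothesis th_congr : congruence th.

Lemma qrepK : cancel (@qrep Sg A th) (qclass th).
Proof.
move=> [P HP]; rewrite /qrep /=.
case: constructive_indefinite_description => a Pa /=.
exact: subset_eq_compat.
Qed.

Lemma qclass_eq (a b : A) : th a b -> qclass th a = qclass th b.
Proof.
case: th_congr => _ [th_sym [th_trans _]] Hab.
have th_ab : th a = th b.
  apply: functional_extensionality => x; apply: propositional_extensionality.
  by split=> ?; [apply: th_trans (th_sym _ _ Hab) _ | apply: th_trans Hab _].
exact: subset_eq_compat.
Qed.

Lemma qclass_inj (a b : A) : qclass th a = qclass th b -> th a b.
Proof.
case: th_congr => th_refl _ /(f_equal (@proj1_sig _ _)) /= ->.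
exact: th_refl.
Qed.

Lemma eval_quotient (w : nat -> A) (t : term Sg) :
  eval (A := quotient th) (fun i => qclass th (w i)) t = qclass th (eval w t).
Proof.
elim: t => [i|o f IH] //=.
apply: qclass_eq; case: th_congr => _ [_ [_ th_op]].
by apply: th_op => k; rewrite IH; apply: qclass_inj; rewrite qrepK.
Qed.

Lemma satisfies_quotient (e : identity Sg) (w : nat -> A) :
  satisfies (quotient th) e -> th (eval w e.1) (eval w e.2).
Proof.
by move=> /(_ (fun i => qclass th (w i))); rewrite !eval_quotient => /qclass_inj.
Qed.

End Quotient.

Lemma in_T_regular (Sg : signature) (m : nat) (t1 t2 : term Sg) :
  in_T m t1 -> in_T m t2 -> regular (t1, t2).
Proof. by move=> [t1_lt lt_t1] [t2_lt lt_t2] i /=; split=> Hi; auto. Qed.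

Theorem proposition2p7 (Sg : signature) (HSg : plural Sg)
  (V : algebra Sg -> Prop) (HV : is_variety V) (A : algebra Sg) :
  VoS V A -> Vp V A.
Proof.
move=> [th [th_congr [th_S th_V]]] _ [sigma [sigma_V [m [_ [s [s_T ->]]]]]] w /=.
rewrite !eval_subst.
set occ := fun i => occurs i sigma.1 \/ occurs i sigma.2.
have s_related i j : occ i -> occ j -> th (eval w (s i)) (eval w (s j)).
  move=> Hi Hj; apply: (@satisfies_quotient _ _ _ th_congr (s i, s j)).
  by apply: th_S; apply: in_T_regular (s_T i Hi) (s_T j Hj).
have [a0 a0_s] : exists a0, forall i, occ i -> th a0 (eval w (s i)).
  case: (classic (exists i, occ i)) => [[i0 Hi0]|no_occ].
  - by exists (eval w (s i0)) => i; apply: s_related.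
  - by exists (w 0) => i Hi; case: no_occ; exists i.
have [class_closed class_V] := th_V a0.
apply: (@satisfies_subalgebra _ _ _ _ _ a0 (fun i => eval w (s i))) a0_s.
- exact: sigma_V.
- by case: th_congr.
Qed.
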